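(* Every causal net is a single execution net: if $K=\langle S,T,F,I,R,\mathsf m,\ell\rangle$ is a causal net, then every state $X\in\mathrm{St}(K)$ is a set.
   Context: A (labelled contextual) Petri net is $N=\langle S,T,F,I,R,\mathsf m,\ell\rangle$ with disjoint places $S$ and transitions $T$, flow $F\subseteq(S\times T)\cup(T\times S)$, inhibitor arcs $I\subseteq S\times T$, read arcs $R\subseteq S\times T$, initial marking $\mathsf m$ (a multiset on $S$) and total labelling $\ell:T\to L$. Notation: ${}^\bullet x=\{y\mid(y,x)\in F\}$, $x^\bullet=\{y\mid(x,y)\in F\}$, ${}^\circ t=\{s\mid (s,t)\in I\}$, $\underline t=\{s\mid (s,t)\in R\}$; every transition has nonempty preset. $t$ is enabled at $m$ if ${}^\bullet t+\underline t\subseteq m$ and $m(s)=0$ for all $s\in{}^\circ t$; firing gives $m-{}^\bullet t+t^\bullet$. A state is the multiset $t_1+\dots+t_n$ of a finite firing sequence from $\mathsf m$; $\mathrm{St}(N)$ is the set of states, $\lfloor X\rfloor$ the support of $X$; a configuration is $\ell(X)$ for a state $X$. Standing assumption: all nets are safe (every reachable marking has at most one token per place). $<_N$ denotes the transitive closure of $F$. Define $t\prec_N t'$ iff ${}^\bullet t\cap{}^\circ t'\neq\emptyset$ or $t^\bullet\cap\underline{t'}\neq\emptyset$; and $t\ \#_N\ t'$ iff no state $X$ satisfies $\{t,t'\}\subseteq\lfloor X\rfloor$. $N$ is a pre-causal net if: (1) $<_N\cap(T\times T)=\emptyset$, and for all $t$: ${}^\bullet t\cap{}^\circ t=\emptyset$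 and $t^\bullet\cap\underline t=\emptyset$; (2) for all $t$ and $s\in{}^\circ t$, $|\ell(s^\bullet)|=1$; (3) $t\prec_N t'$ implies not $t'\prec_N t$; (4) ${}^\circ t\cup\underline t$ is finite for every $t$; (5) $t\ \#_N\ t'$ implies ${}^\bullet t\cap{}^\bullet t'\neq\emptyset$; (6) $t\neq t'$ and $\ell(t)=\ell(t')$ imply $t\ \#_N\ t'$. A causal net is a pre-causal net $K$ such that (a) for every $X\in\mathrm{St}(K)$ the reflexive transitive closure $\prec_K^{*}$ restricted to $\lfloor X\rfloor$ is a partial order, and (b) every $t\in T$ lies in $\lfloor X\rfloor$ for some state $X$. A net is single execution if every state is a set. *)

From Stdlib Require Import Relations List.

Set Implicit Arguments.

(* Places have type Pl, transitions type Tr (disjoint by construction),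
   labels type L.  The flow relation F ⊆ (S×T) ∪ (T×S) is split into its
   two parts [pre] (S×T) and [post] (T×S). *)
Record net (Pl Tr L : Type) := Net {
  pre  : Pl -> Tr -> bool;
  post : Tr -> Pl -> bool;
  inh  : Pl -> Tr -> bool;   (* (s,t) ∈ I *)
  rd   : Pl -> Tr -> bool;   (* (s,t) ∈ R *)
  m0   : Pl -> nat;
  lab  : Tr -> L
}.

Section Nets.
Variables (Pl Tr L : Type) (N : net Pl Tr L).

Definition b2n (b : bool) : nat := if b then 1 else 0.

Definition is_net : Prop := forall t : Tr, exists s : Pl, pre N s t = true.

Definition enabled (m : Pl -> nat) (t : Tr) : Prop :=
  (forall s, b2n (pre N s t) + b2n (rd N s t) <= m s) /\
  (forall s, inh N s t = true -> m s = 0).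

Definition fire (m : Pl -> nat) (t : Tr) (m' : Pl -> nat) : Prop :=
  forall s, m' s = m s - b2n (pre N s t) + b2n (post N t s).

Inductive reach : (Pl -> nat) -> (Tr -> nat) -> Prop :=
| reach0 : reach (m0 N) (fun _ => 0)
| reachS : forall m X t m' X',
    reach m X -> enabled m t -> fire m t m' ->
    X' t = X t + 1 -> (forall u, u <> t -> X' u = X u) ->
    reach m' X'.

Definition state (X : Tr -> nat) : Prop := exists m, reach m X.

Definition safe : Prop := forall m X, reach m X -> forall s, m s <= 1.

Definition flow (x y : Pl + Tr) : Prop :=
  match x, y with
  | inl s, inr t => pre N s t = true
  | inr t, inl s => post N t s = true
  | _, _ => False
  end.

Definition ltN : relation (Pl + Tr) := clos_trans (Pl + Tr) flow.

Definition prec (t t' : Tr) : Prop :=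
  (exists s, pre N s t = true /\ inh N s t' = true) \/
  (exists s, post N t s = true /\ rd N s t' = true).

Definition conflict (t t' : Tr) : Prop :=
  ~ exists X, state X /\ 0 < X t /\ 0 < X t'.

Definition pre_causal : Prop :=
  (forall t t' : Tr, ~ ltN (inr t) (inr t')) /\
  (forall t s, ~ (pre N s t = true /\ inh N s t = true)) /\
  (forall t s, ~ (post N t s = true /\ rd N s t = true)) /\
  (forall t s, inh N s t = true ->
     exists a : L, forall b : L,
       (exists t', pre N s t' = true /\ lab N t' = b) <-> b = a) /\
  (forall t t', prec t t' -> ~ prec t' t) /\
  (forall t, exists l : list Pl,
     forall s, inh N s t = true \/ rd N s t = true -> In s l) /\
  (forall t t', conflict t t' -> exists s, pre N s t = true /\ pre N s t' = true) /\
  (forall t t', t <> t' -> lab N t = lab N t' -> conflict t t').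

Definition partial_order_on_support (X : Tr -> nat) : Prop :=
  let R := clos_refl_trans Tr prec in
  (forall t, 0 < X t -> R t t) /\
  (forall t t' t'', 0 < X t -> 0 < X t' -> 0 < X t'' ->
     R t t' -> R t' t'' -> R t t'') /\
  (forall t t', 0 < X t -> 0 < X t' -> R t t' -> R t' t -> t = t').

Definition causal : Prop :=
  pre_causal /\
  (forall X, state X -> partial_order_on_support X) /\
  (forall t : Tr, exists X, state X /\ 0 < X t).

Definition single_execution : Prop :=
  forall X, state X -> forall t, X t <= 1.

End Nets.

From Stdlib Require Import Relations List Lia Classical_Prop.

(* Fix a transition t and, since the net has nonempty presets, a place s in
   its preset.  Condition (1) of pre-causality says that the flow relation has
   no path between two transitions; a transition u with s in its postset would
   give the path u F s F t, so no transition ever produces a token on s.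
   Along any firing sequence the count on s therefore only decreases, and
   every firing of t removes one token from it: for each reachable marking m
   with multiset of fired transitions X we get  m(s) + X(t) <= m0(s).
   Safety of the initial marking gives m0(s) <= 1, hence X(t) <= 1. *)

Section TokenBudget.
Variables (Pl Tr L : Type) (N : net Pl Tr L).

Lemma preset_place_unproduced (s : Pl) (t : Tr) :
  (forall u t' : Tr, ~ ltN N (inr u) (inr t')) ->
  pre N s t = true -> forall u, post N u s = false.
Proof.
  intros Hacyclic Hpre u.
  destruct (post N u s) eqn:Hpost; [|reflexivity].
  exfalso; apply (Hacyclic u t).
  apply t_trans with (y := inl s); apply t_step; assumption.
Qed.

Lemma unproduced_place_budget (s : Pl) (t : Tr) :
  pre N s t = true -> (forall u, post N u s = false) ->
  forall m X, reach N m X -> m s + X t <= m0 N s.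
Proof.
  intros Hpre Hunproduced m X Hreach.
  induction Hreach as [|m X u m' X' _ IH [Hcover _] Hfire Hfired Hother].
  - lia.
  - (* firing u only removes tokens from s, and removes one when u = t;
       transitions carry no decidable equality, so we split classically *)
    assert (Hdrop : m' s = m s - b2n (pre N s u)).
    { rewrite (Hfire s), Hunproduced; simpl; lia. }
    specialize (Hcover s).
    destruct (classic (u = t)) as [-> | Hne].
    + rewrite Hpre in Hcover, Hdrop; simpl in Hcover, Hdrop. lia.
    + rewrite (Hother t (fun e => Hne (eq_sym e))). lia.
Qed.

End TokenBudget.

Theorem mainTheorem5 (Pl Tr L : Type) (K : net Pl Tr L) :
  is_net K -> safe K -> causal K -> single_execution K.
Proof.
  intros Hnet Hsafe [[Hacyclic _] _] X [m Hreach] t.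
  destruct (Hnet t) as [s Hpre].
  pose proof (unproduced_place_budget _ _ _ K s t Hpre
                (preset_place_unproduced _ _ _ K s t Hacyclic Hpre) _ _ Hreach).
  pose proof (Hsafe _ _ (reach0 K) s).
  lia.
Qed.
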